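(* Let $k$ be a nonnegative integer. Then there exist rational numbers $\xi_\nu$, indexed by integer partitions $\nu$ with $|\nu|\le k$, such that for every $m\ge0$ and all real numbers $a_0<a_1<\cdots<a_m$ and $b_1<b_2<\cdots<b_m$, $$\sum_{0\le i\le m}\frac{\prod_{1\le j\le m}(a_i-b_j)}{\prod_{0\le j\le m,\ j\ne i}(a_i-a_j)}\,a_i^k=\sum_{|\nu|\le k}\xi_\nu\, q_\nu(\{a_i\},\{b_i\}).$$
   Context: For numbers $a_0,\dots,a_m$ and $b_1,\dots,b_m$ and $k\ge0$, set $q_k(\{a_i\},\{b_i\})=\sum_{i=0}^m a_i^k-\sum_{i=1}^m b_i^k$. For an integer partition $\nu=(\nu_1,\dots,\nu_\ell)$ (a weakly decreasing finite sequence of positive integers, $|\nu|=\sum\nu_j$), set $q_\nu(\{a_i\},\{b_i\})=\prod_{j=1}^{\ell}q_{\nu_j}(\{a_i\},\{b_i\})$, with $q_\emptyset=1$. *)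

From HB Require Import structures.
From mathcomp Require Import all_boot all_order all_algebra.
Set Implicit Arguments. Unset Strict Implicit. Unset Printing Implicit Defensive.
Import Order.TTheory GRing.Theory Num.Theory.
Local Open Scope ring_scope.

Definition is_partition (nu : seq nat) : bool :=
  sorted geq nu && all (fun x => 0 < x)%N nu.

Fixpoint seqs_upto (n k : nat) : seq (seq nat) :=
  match n with
  | 0 => [:: [::]]
  | n'.+1 => [::] :: [seq x :: s | x <- iota 1 k, s <- seqs_upto n' k]
  end.

Definition partitions_upto (k : nat) : seq (seq nat) :=
  undup [seq nu <- seqs_upto k k | is_partition nu & (sumn nu <= k)%N].

Definition qk {R : pzRingType} (m : nat) (a b : nat -> R) (k : nat) : R :=
  \sum_(0 <= i < m.+1) a i ^+ k - \sum_(1 <= i < m.+1) b i ^+ k.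

Definition qpart {R : pzRingType} (m : nat) (a b : nat -> R) (nu : seq nat) : R :=
  \prod_(p <- nu) qk m a b p.

(* Let L_k be the left-hand side. Its generating function sum_k L_k z^k is
   prod_j (1 - b_j z) / prod_i (1 - a_i z): adding the nodes a_(m+1), b_(m+1)
   multiplies it by (1 - b_(m+1) z) / (1 - a_(m+1) z) up to a multiple of
   1 / (1 - a_(m+1) z), which vanishes because L_0 = 1 is the top coefficient
   of a Lagrange interpolation. The logarithmic derivative of this product is
   sum_(n >= 1) q_n z^n, so k L_k = sum_(t < k) L_t q_(k-t) (Newton's
   identities), which writes L_k as a rational combination of the q_nu with
   |nu| = k. *)

From HB Require Import structures.
From mathcomp Require Import all_boot all_order all_algebra.
From mathcomp Require Import zify ring.
Import Order.TTheory GRing.Theory Num.Theory.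
Local Open Scope ring_scope.
Set Implicit Arguments. Unset Strict Implicit. Unset Printing Implicit Defensive.

Section FormalSeries.
Variable R : comNzRingType.
Implicit Types (f g h Q : nat -> R) (a b : R).

Definition conv f g : nat -> R := fun k => \sum_(j < k.+1) f j * g (k - j)%N.

Lemma eq_conv f f' g g' : f =1 f' -> g =1 g' -> conv f g =1 conv f' g'.
Proof. by move=> ef eg k; apply: eq_bigr => j _; rewrite ef eg. Qed.

Lemma conv_coefM f g N k : (k < N)%N ->
  conv f g k = ((\poly_(i < N) f i) * (\poly_(i < N) g i))`_k.
Proof.
move=> ltkN; rewrite coefM; apply: eq_bigr => j _.
by rewrite !coef_poly (leq_ltn_trans (leq_ord j)) ?(leq_ltn_trans (leq_subr _ _)).
Qed.

Lemma eq_coefMl (p p' q : {poly R}) k :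
  (forall j, (j <= k)%N -> p`_j = p'`_j) -> (p * q)`_k = (p' * q)`_k.
Proof. by move=> epp'; rewrite !coefM; apply: eq_bigr => j _; rewrite epp' // -ltnS. Qed.

Lemma convC f g : conv f g =1 conv g f.
Proof. by move=> k; rewrite !(conv_coefM _ _ (ltnSn k)) mulrC. Qed.

Lemma convA f g h : conv (conv f g) h =1 conv f (conv g h).
Proof.
move=> k; set P := fun u : nat -> R => \poly_(i < k.+1) u i.
have truncP u v j : (j <= k)%N -> (P (conv u v))`_j = (P u * P v)`_j.
  by move=> lejk; rewrite coef_poly ltnS lejk -conv_coefM.
rewrite !(conv_coefM _ _ (ltnSn k)) (eq_coefMl _ (truncP f g)) -mulrA mulrC.
by rewrite [in RHS]mulrC (eq_coefMl _ (truncP g h)).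
Qed.

Lemma convDr f g h : conv f (fun n => g n + h n) =1 fun k => conv f g k + conv f h k.
Proof. by move=> k; rewrite /conv -big_split; apply: eq_bigr => j _; rewrite mulrDr. Qed.

Lemma conv_suml (I : Type) (r : seq I) (c : I -> R) (u : I -> nat -> R) g k :
  conv (fun n => \sum_(i <- r) c i * u i n) g k = \sum_(i <- r) c i * conv (u i) g k.
Proof.
rewrite /conv (eq_bigr _ (fun j _ => big_distrl _ _ _)) exchange_big /=.
by apply: eq_bigr => i _; rewrite big_distrr /=; apply: eq_bigr => j _; rewrite mulrA.
Qed.

Definition zderiv f : nat -> R := fun k => k%:R * f k.

Lemma zderiv_conv f g :
  zderiv (conv f g) =1 fun k => conv (zderiv f) g k + conv f (zderiv g) k.
Proof.
move=> k; rewrite /zderiv /conv big_distrr -big_split; apply: eq_bigr => j _ /=.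
rewrite -{1}(subnKC (leq_ord j : (j <= k)%N)) natrD mulrDl.
by rewrite mulrA [_%:R * (f j * _)]mulrCA mulrA.
Qed.

(* [z f' = f Q]: [Q] is [z] times the logarithmic derivative of [f]. *)
Definition has_logder f Q := forall k, zderiv f k = conv f Q k.

Lemma eq_has_logder f f' Q Q' : f =1 f' -> Q =1 Q' -> has_logder f Q -> has_logder f' Q'.
Proof.
by move=> ef eQ hf k; rewrite /zderiv -ef -(eq_conv ef eQ) -[_ * _]/(zderiv f k).
Qed.

Lemma has_logder_conv f g Qf Qg : has_logder f Qf -> has_logder g Qg ->
  has_logder (conv f g) (fun n => Qf n + Qg n).
Proof.
move=> hf hg k; rewrite zderiv_conv convDr (eq_conv hf (frefl g)) (eq_conv (frefl f) hg).
rewrite convA (eq_conv (frefl f) (convC Qf g)) -convA.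
by rewrite -(convA f g Qg).
Qed.

Definition drop_const Q : nat -> R := fun n => if n == 0%N then 0 else Q n.

Definition geom a : nat -> R := fun k => a ^+ k.

Lemma has_logder_geom a : has_logder (geom a) (drop_const (geom a)).
Proof.
move=> k; rewrite /zderiv /conv big_ord_recr /= subnn /drop_const eqxx mulr0 addr0.
rewrite (eq_bigr (fun _ => a ^+ k)) ?sumr_const ?card_ord ?mulr_natl // => j _.
by rewrite subn_eq0 leqNgt ltn_ord /geom -exprD subnKC // ltnW.
Qed.

Definition lin_series b : nat -> R :=
  fun k => if k == 0%N then 1 else if k == 1%N then - b else 0.

Lemma has_logder_lin b : has_logder (lin_series b) (drop_const (fun n => - b ^+ n)).
Proof.
case=> [|[|k]]; rewrite /zderiv /conv /lin_series /drop_const.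
- by rewrite big_ord1 mul0r mulr0.
- by rewrite big_ord_recr big_ord1 /= mulr0 addr0 subn0 expr1.
rewrite big_ord_recl big_ord_recl big1 => [|j _]; last by rewrite mul0r.
by rewrite /= subn0 subn1 /= mulr0 mul1r mulrNN -exprS addr0 addNr.
Qed.

(* The coefficients of (1 - b z) / (1 - a z). *)
Definition ratio_series a b : nat -> R :=
  fun k => if k == 0%N then 1 else (a - b) * a ^+ k.-1.

Lemma ratio_seriesE a b : ratio_series a b =1 conv (lin_series b) (geom a).
Proof.
case=> [|k]; rewrite /ratio_series /conv /lin_series /geom.
  by rewrite big_ord1 mul1r expr0.
rewrite !big_ord_recl big1 => [|j _]; last by rewrite mul0r.
by rewrite /= subn0 subn1 mul1r addr0 exprS mulrBl mulNr.
Qed.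

Lemma has_logder_ratio a b :
  has_logder (ratio_series a b) (drop_const (fun n => a ^+ n - b ^+ n)).
Proof.
apply: eq_has_logder (has_logder_conv (has_logder_lin b) (has_logder_geom a)).
- by move=> k; rewrite ratio_seriesE.
- by case=> [|n]; rewrite /drop_const /= ?addr0 // addrC.
Qed.

Lemma conv_geom_ratio a b c k :
  (c - a) * conv (geom c) (ratio_series a b) k = (c - b) * c ^+ k - (a - b) * a ^+ k.
Proof.
rewrite /conv big_ord_recr /= subnn /ratio_series eqxx mulr1.
rewrite (eq_bigr (fun j : 'I_k => (a - b) * (c ^+ j * a ^+ (k.-1 - j)))); last first.
  move=> j _; rewrite subn_eq0 leqNgt ltn_ord /= /geom mulrCA.
  by congr (_ * (_ * a ^+ _)); have := ltn_ord j; lia.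
rewrite -big_distrr mulrDr mulrCA.
have -> : (c - a) * \sum_(j < k) c ^+ j * a ^+ (k.-1 - j) = c ^+ k - a ^+ k.
  by rewrite -opprB mulNr (eq_bigr _ (fun j _ => mulrC _ _)) -subrXX opprB.
rewrite /geom; ring.
Qed.

End FormalSeries.

Section Interpolation.
Variable F : fieldType.

(* Interpolate [p] at the nodes [s] and compare the coefficients of degree [size s - 1]. *)
Lemma lagrange_coef_last (s : seq F) (p : {poly F}) :
  uniq s -> (size p <= size s)%N ->
  \sum_(x <- s) p.[x] / \prod_(y <- s | y != x) (x - y) = p`_(size s).-1.
Proof.
move=> uniq_s size_p.
pose l x := \prod_(y <- s | y != x) ('X - y%:P).
have l_at x : (l x).[x] = \prod_(y <- s | y != x) (x - y).
  by rewrite horner_prod; apply: eq_bigr => y _; rewrite hornerXsubC.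
have l_at_node x y : y \in s -> y != x -> (l x).[y] = 0.
  move=> sy neq_yx; apply/eqP; rewrite horner_prod prodf_seq_eq0.
  by apply/hasP; exists y; rewrite // neq_yx hornerXsubC subrr /=.
have l_neq0 x : x \in s -> (l x).[x] != 0.
  move=> sx; rewrite l_at prodf_seq_neq0; apply/allP => y sy.
  by apply/implyP; rewrite subr_eq0 eq_sym.
have size_l x : x \in s -> size (l x) = size s.
  move=> sx; rewrite /l -big_filter size_prod_XsubC -rem_filter //.
  by rewrite size_rem // prednK // -has_predT; apply/hasP; exists x.
pose P := \sum_(x <- s) (p.[x] / (l x).[x]) *: l x.
have P_at y : y \in s -> P.[y] = p.[y].
  move=> sy; rewrite horner_sum (bigD1_seq y) //= big1_seq => [|x /andP[neq_xy _]].
    by rewrite hornerZ addr0 divfK ?l_neq0.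
  by rewrite hornerZ (l_at_node x y) ?mulr0 // eq_sym.
have size_P : (size P <= size s)%N.
  rewrite (leq_trans (size_sum _ _ _)) //; apply/bigmax_leqP_seq => x sx _.
  by rewrite (leq_trans (size_scale_leq _ _)) ?size_l.
have p_eq : p = P.
  apply/eqP; rewrite -subr_eq0; apply/eqP/(roots_geq_poly_eq0 _ uniq_s).
    by apply/allP => y sy; rewrite rootE !hornerE P_at ?subrr.
  by rewrite (leq_trans (size_polyD _ _)) // size_polyN geq_max size_p.
rewrite [in RHS]p_eq coef_sum; apply: eq_big_seq => x sx.
by rewrite coefZ -(size_l x sx) -lead_coefE (monicP (monic_prod_XsubC _ _ _)) mulr1 l_at.
Qed.

End Interpolation.

Section Moments.
Variable F : fieldType.
Implicit Types (a b : nat -> F) (m k : nat).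

Definition lcoef m a b i : F :=
  (\prod_(1 <= j < m.+1) (a i - b j)) / \prod_(0 <= j < m.+1 | j != i) (a i - a j).

Definition moment m a b k : F := \sum_(0 <= i < m.+1) lcoef m a b i * a i ^+ k.

Lemma moment0 m a b : {in index_iota 0 m.+1 &, injective a} -> moment m a b 0 = 1.
Proof.
move=> inj_a; set r := index_iota 0 m.+1.
pose f := \prod_(1 <= j < m.+1) ('X - (b j)%:P).
have size_f : size f = m.+1.
  by rewrite size_prod_XsubC size_iota subn1.
have uniq_ar : uniq (map a r) by rewrite map_inj_in_uniq ?iota_uniq.
have := lagrange_coef_last (p := f) uniq_ar; rewrite size_map size_iota subn0 size_f leqnn => /(_ isT).
rewrite -size_f -lead_coefE (monicP (monic_prod_XsubC _ _ _)) big_map => <-.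
apply: eq_big_seq => i ri; rewrite expr0 mulr1 /lcoef horner_prod big_map.
congr (_ / _); first by apply: eq_bigr => j _; rewrite hornerXsubC.
rewrite big_seq_cond [RHS]big_seq_cond; apply: eq_bigl => j.
by case rj: (j \in r); rewrite //= (inj_in_eq inj_a).
Qed.

Lemma lcoefS m a b i : (i < m.+1)%N ->
  lcoef m.+1 a b i = lcoef m a b i * (a i - b m.+1) / (a i - a m.+1).
Proof.
move=> lt_im; rewrite /lcoef big_nat_recr //= [in X in _ / X]big_mkcond.
rewrite big_nat_recr //= -big_mkcond /= eq_sym (ltn_eqF lt_im) invfM; ring.
Qed.

Lemma index_iota_injS n a :
  {in index_iota 0 n.+1 &, injective a} -> {in index_iota 0 n &, injective a}.
Proof. by apply: sub_in2 => j; rewrite !mem_index_iota; lia. Qed.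

Lemma momentS m a b : {in index_iota 0 m.+2 &, injective a} ->
  moment m.+1 a b =1 conv (moment m a b) (ratio_series (a m.+1) (b m.+1)).
Proof.
move=> inj_a; have inj_a' := index_iota_injS inj_a.
set A := a m.+1; set B := b m.+1; set H := ratio_series A B.
pose D := lcoef m.+1 a b m.+1 + \sum_(0 <= i < m.+1) lcoef m a b i * (A - B) / (a i - A).
have split_k k : moment m.+1 a b k = conv (moment m a b) H k + A ^+ k * D.
  have term i : (i < m.+1)%N -> lcoef m.+1 a b i * a i ^+ k =
      lcoef m a b i * conv (geom (a i)) H k + A ^+ k * (lcoef m a b i * (A - B) / (a i - A)).
    move=> lt_im; have neq_aA : a i - A != 0.
      by rewrite subr_eq0 (inj_in_eq inj_a) ?mem_index_iota; lia.
    have -> : conv (geom (a i)) H k = ((a i - B) * a i ^+ k - (A - B) * A ^+ k) / (a i - A).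
      by rewrite -conv_geom_ratio [RHS]mulrC mulKf.
    by rewrite lcoefS // -/A -/B; field.
  rewrite /moment big_nat_recr //= (conv_suml _ (lcoef m a b) (fun i => geom (a i))).
  rewrite mulrDr big_distrr addrCA -big_split /= [in RHS]addrC mulrC; congr (_ + _).
  by apply: eq_big_nat => i /andP[_ lt_im]; rewrite term.
have D0 : D = 0.
  have := split_k 0; rewrite expr0 mul1r /conv big_ord1 /H /ratio_series /= mulr1.
  rewrite !moment0 // => eq_1D.
  by apply: (addrI 1); rewrite addr0 -eq_1D.
by move=> k; rewrite split_k D0 mulr0 addr0.
Qed.

Lemma has_logder_moment m a b : {in index_iota 0 m.+1 &, injective a} ->
  has_logder (moment m a b) (drop_const (qk m a b)).
Proof.
elim: m => [|m IH] inj_a.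
  apply: eq_has_logder (has_logder_geom (a 0%N)).
    move=> k; rewrite /moment /lcoef big_nat1 big_geq // big_mkcond big_nat1 /=.
    by rewrite invr1 !mul1r.
  by case=> // n; rewrite /drop_const /qk big_nat1 big_geq // subr0.
apply: eq_has_logder (has_logder_conv (IH (index_iota_injS inj_a)) (has_logder_ratio _ _)).
  by move=> k; rewrite (momentS _ inj_a).
case=> [|n]; rewrite /drop_const /= ?addr0 // /qk.
by rewrite (big_nat_recr _ _ _ (leq0n m.+1)) (big_nat_recr _ _ _ (ltn0Sn m)) /= opprD addrACA.
Qed.

End Moments.

Section RationalExpansion.
Variable R : numFieldType.
Implicit Types (a b : nat -> R) (m k : nat).

Lemma moment_rec m a b k : {in index_iota 0 m.+1 &, injective a} ->
  moment m a b k.+1 =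
    (k.+1)%:R^-1 * \sum_(0 <= t < k.+1) moment m a b t * qk m a b (k.+1 - t).
Proof.
move=> inj_a; have := has_logder_moment b inj_a k.+1.
rewrite /zderiv /conv big_ord_recr /= subnn {2}/drop_const eqxx mulr0 addr0 => eq_k.
suff -> : \sum_(0 <= t < k.+1) moment m a b t * qk m a b (k.+1 - t) = k.+1%:R * moment m a b k.+1.
  by rewrite mulKf ?pnatr_eq0.
by rewrite eq_k big_mkord; apply: eq_bigr => t _; rewrite /drop_const subn_eq0 leqNgt ltn_ord.
Qed.

(* A rational combination of the q_nu, each nu given by an unsorted list of parts. *)
Definition qexp m a b (S : seq (rat * seq nat)) : R :=
  \sum_(p <- S) ratr p.1 * qpart m a b p.2.

Definition qexp_weight j (S : seq (rat * seq nat)) :=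
  all (fun p => all (fun x => 0 < x)%N p.2 && (sumn p.2 == j)) S.

Lemma moment_qexp K : exists T : nat -> seq (rat * seq nat), forall j, (j <= K)%N ->
  qexp_weight j (T j) /\
  forall m a b, {in index_iota 0 m.+1 &, injective a} -> moment m a b j = qexp m a b (T j).
Proof.
elim: K => [|K [T IH]].
  exists (fun _ => [:: (1%Q, [::])]) => j; rewrite leqn0 => /eqP ->.
  split=> // m a b inj_a.
  by rewrite moment0 // /qexp big_seq1 rmorph1 mul1r /qpart big_nil.
pose S := [seq (p.1 / K.+1%:R, (K.+1 - t)%N :: p.2) | t <- index_iota 0 K.+1, p <- T t].
exists (fun j => if j == K.+1 then S else T j) => j le_jK1.
case: eqP => [->|/eqP neq_jK]; last by apply: IH; lia.
split.
  apply/allP => q /allpairsPdep[t [p [t_lt p_in ->]]] /=.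
  move: t_lt; rewrite mem_index_iota => /andP[_ lt_tK].
  have /andP[pos_p /eqP sum_p] := allP (proj1 (IH t lt_tK)) p p_in.
  by rewrite pos_p sum_p andbT; lia.
move=> m a b inj_a; rewrite moment_rec // /qexp big_allpairs_dep /= big_distrr.
apply: eq_big_nat => t /andP[_ lt_tK]; rewrite (proj2 (IH t lt_tK)) //.
rewrite /qexp big_distrl big_distrr /=; apply: eq_bigr => p _.
by rewrite /qpart big_cons rmorphM fmorphV /= ratr_nat; ring.
Qed.

End RationalExpansion.

Lemma mem_seqs_upto n k s : (size s <= n)%N -> all (fun x => 0 < x <= k)%N s ->
  s \in seqs_upto n k.
Proof.
elim: n s => [|n IH] [|x s] //= size_s /andP[x_bd s_bd].
by rewrite in_cons; apply/orP; right; apply: allpairs_f; rewrite ?mem_iota ?IH.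
Qed.

Lemma size_leq_sumn s : all (fun x => 0 < x)%N s -> (size s <= sumn s)%N.
Proof. by elim: s => //= x s IH /andP[pos_x /IH]; rewrite -add1n; apply: leq_add. Qed.

Lemma mem_leq_sumn s x : x \in s -> (x <= sumn s)%N.
Proof.
elim: s => //= y s IH; rewrite in_cons => /predU1P[->|/IH]; first exact: leq_addr.
by move/leq_trans; apply; apply: leq_addl.
Qed.

Lemma sort_mem_partitions_upto k s : all (fun x => 0 < x)%N s -> (sumn s <= k)%N ->
  sort geq s \in partitions_upto k.
Proof.
move=> pos_s sum_s; have perm_s : perm_eq (sort geq s) s by rewrite perm_sort.
rewrite mem_undup mem_filter /is_partition (perm_all _ perm_s) (perm_sumn perm_s).
rewrite sort_sorted ?pos_s ?sum_s /=; last by move=> x y; apply: leq_total.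
apply: mem_seqs_upto; first by rewrite size_sort (leq_trans (size_leq_sumn pos_s)).
apply/allP => x; rewrite mem_sort => sx.
by rewrite (allP pos_s x sx) (leq_trans (mem_leq_sumn sx)).
Qed.

Lemma qexp_partitions (R : numFieldType) k (S : seq (rat * seq nat)) :
  all (fun p => all (fun x => 0 < x)%N p.2 && (sumn p.2 <= k)%N) S ->
  exists xi : seq nat -> rat, forall m (a b : nat -> R),
    qexp m a b S = \sum_(nu <- partitions_upto k) ratr (xi nu) * qpart m a b nu.
Proof.
elim: S => [|[c s] S IH] /=.
  exists (fun _ => 0%Q) => m a b; rewrite /qexp big_nil big1 // => nu _.
  by rewrite rmorph0 mul0r.
case/andP=> /andP[pos_s sum_s] /IH[xi qexpE].
exists (fun nu => xi nu + (if nu == sort geq s then c else 0%Q)) => m a b.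
rewrite /qexp big_cons -/(qexp _ _ _ _) qexpE addrC.
under [RHS]eq_bigr do rewrite rmorphD mulrDl.
rewrite big_split /=; congr (_ + _).
rewrite (bigD1_seq (sort geq s)) ?undup_uniq ?sort_mem_partitions_upto //= eqxx.
rewrite big1 ?addr0 => [|nu /negbTE ->]; last by rewrite rmorph0 mul0r.
by congr (_ * _); apply: perm_big; rewrite perm_sym perm_sort.
Qed.

Lemma incr_index_iota_inj (d : Order.disp_t) (T : porderType d) m (a : nat -> T) :
  (forall i, (i < m)%N -> (a i < a i.+1)%O) -> {in index_iota 0 m.+1 &, injective a}.
Proof.
move=> incr_a; apply: inc_inj_in; apply: Order.NatMonotonyTheory.incn_inP.
  move=> i j _; rewrite mem_index_iota => /andP[_ lt_jm] l /andP[_ lt_lj].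
  by rewrite mem_index_iota (ltn_trans lt_lj lt_jm).
by move=> i _; rewrite mem_index_iota => /andP[_]; apply: incr_a.
Qed.

Theorem theorem3p2 (R : realFieldType) (k : nat) :
  exists xi : seq nat -> rat,
    forall (m : nat) (a b : nat -> R),
      (forall i, (i < m)%N -> a i < a i.+1) ->
      (forall j, (1 <= j)%N -> (j < m)%N -> b j < b j.+1) ->
      \sum_(0 <= i < m.+1)
         ((\prod_(1 <= j < m.+1) (a i - b j))
          / (\prod_(0 <= j < m.+1 | j != i) (a i - a j)) * a i ^+ k)
      = \sum_(nu <- partitions_upto k) ratr (xi nu) * qpart m a b nu.
Proof.
have [T expT] := moment_qexp R k.
have [weight_k moment_k] := expT k (leqnn k).
have [xi qexpE] : exists xi : seq nat -> rat, forall m (a b : nat -> R),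
    qexp m a b (T k) = \sum_(nu <- partitions_upto k) ratr (xi nu) * qpart m a b nu.
  apply: qexp_partitions; apply: sub_all weight_k => p /andP[pos_p /eqP sum_p].
  by rewrite pos_p sum_p leqnn.
exists xi => m a b /incr_index_iota_inj inj_a _.
by rewrite -qexpE -moment_k.
Qed.
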